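(* Let $M(n)$ denote the maximum cardinality of a set $\mathsf{B}\subseteq\{0,1\}^n$ such that any two distinct strings in $\mathsf{B}$ have a skewincidence. Then $$\lim_{n\to\infty}\frac{M(n)}{2^n}=1.$$
   Context: Two binary strings $\mathbf{x}=x_1\dots x_n$ and $\mathbf{y}=y_1\dots y_n$ in $\{0,1\}^n$ have a skew coincidence (skewincidence) if there is a coordinate $i\in[n-1]$ with $x_i=y_{i+1}=1$ or $x_{i+1}=y_i=1$. *)

From mathcomp Require Import all_boot.
From Stdlib Require Import Reals.
Set Implicit Arguments. Unset Strict Implicit. Unset Printing Implicit Defensive.

Definition bstring (n : nat) := {ffun 'I_n -> bool}.

(* Skew coincidence: some i with i+1 < n and
   (x_i = y_{i+1} = 1) or (x_{i+1} = y_i = 1).  (0-indexed version of i in [n-1]). *)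
Definition skewincidence (n : nat) (x y : bstring n) : bool :=
  [exists i : 'I_n, exists j : 'I_n,
     (val j == (val i).+1) && ((x i && y j) || (x j && y i))].

Definition skew_family (n : nat) (B : {set bstring n}) : bool :=
  [forall x in B, forall y in B, (x != y) ==> skewincidence x y].

Definition M (n : nat) : nat :=
  \max_(B : {set bstring n} | skew_family B) #|B|.

(* A family in which every pair of strings, equal or not, has a skewincidence can be
   padded by free coordinates, so it yields 2^r times as many strings of length n + r.
   Such families come from blocks: cut a string of length K * L into K blocks of length
   L = 4m and call the positions j = 1, 2 (mod 4) the pattern; every position of a block
   is adjacent to a pattern position.  Take the strings all of whose blocks are nonzero
   and one of whose blocks contains the whole pattern.  For two of them x and y, let b be
   a pattern-filled block of x and j a one of y in block b; the pattern neighbour of j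
   gives the skewincidence.  A uniform string fails to qualify with probability at most
   K 2^-L (a zero block) plus (1 - 2^-(L/2))^K (no filled block), and for K = 2^(3m)
   both are O(2^-m), by Bernoulli's inequality. *)

From mathcomp Require Import all_boot zify.
Set Implicit Arguments. Unset Strict Implicit. Unset Printing Implicit Defensive.

Lemma M_ge n (B : {set bstring n}) : skew_family B -> #|B| <= M n.
Proof. exact: (leq_bigmax_cond (F := fun B : {set bstring n} => #|B|)). Qed.

Lemma M_le n : M n <= 2 ^ n.
Proof.
apply/bigmax_leqP => B _; apply: leq_trans (max_card _) _.
by rewrite card_ffun card_bool card_ord.
Qed.

Definition strongly_skew n (B : {set bstring n}) :=
  [forall x in B, forall y in B, skewincidence x y].

Lemma strongly_skew_family n (B : {set bstring n}) : strongly_skew B -> skew_family B.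
Proof.
move=> /forall_inP sB; apply/forall_inP => x xB; apply/forall_inP => y yB.
by apply/implyP => _; move/forall_inP: (sB x xB); apply.
Qed.

Definition extend n (x : bstring n) (b : bool) : bstring n.+1 :=
  [ffun p => if unlift ord_max p is Some q then x q else b].

Lemma extend_lift n (x : bstring n) b q : extend x b (lift ord_max q) = x q.
Proof. by rewrite ffunE liftK. Qed.

Lemma extend_max n (x : bstring n) b : extend x b ord_max = b.
Proof. by rewrite ffunE unlift_none. Qed.

Lemma extend_inj n : injective (fun xb : bstring n * bool => extend xb.1 xb.2).
Proof.
move=> [x b] [y c] /= E; congr pair.
  by apply/ffunP => q; rewrite -(extend_lift x b) -(extend_lift y c) E.
by rewrite -(extend_max x b) -(extend_max y c) E.
Qed.

Lemma skewincidence_extend n (x y : bstring n) b c :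
  skewincidence x y -> skewincidence (extend x b) (extend y c).
Proof.
case/existsP => i /existsP [j xy_ij]; apply/existsP; exists (lift ord_max i).
apply/existsP; exists (lift ord_max j).
have val_lift (k : 'I_n) : val (lift ord_max k) = val k by exact: lift_max.
by rewrite !extend_lift !val_lift.
Qed.

Lemma strongly_skew_double n (B : {set bstring n}) : strongly_skew B ->
  strongly_skew [set extend xb.1 xb.2 | xb in setX B [set: bool]].
Proof.
move=> /forall_inP sB; apply/forall_inP => _ /imsetP [[x b] /setXP [xB _] ->].
apply/forall_inP => _ /imsetP [[y c] /setXP [yB _] ->].
by apply: skewincidence_extend; move/forall_inP: (sB x xB); apply.
Qed.

Lemma M_pad n r (B : {set bstring n}) : strongly_skew B -> 2 ^ r * #|B| <= M (n + r).
Proof.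
elim: r n B => [|r IHr] n B sB; first by rewrite mul1n addn0 M_ge ?strongly_skew_family.
rewrite -addSnnS; apply: leq_trans (IHr _ _ (strongly_skew_double sB)).
rewrite card_imset; last exact: extend_inj.
by rewrite cardsX cardsT card_bool expnS [2 * _]mulnC -mulnA [#|B| * 2]mulnC.
Qed.

Definition in_pattern (j : nat) : bool := (j %% 4 == 1) || (j %% 4 == 2).

Definition free_count L := #|[pred j : 'I_L | ~~ in_pattern j]|.

Lemma free_count_ge L : L %/ 2 <= free_count L.
Proof.
have lt_code (t : 'I_(L %/ 2)) : 2 * t + odd t < L.
  by have := ltn_ord t; case: (odd t); lia.
pose code t := Ordinal (lt_code t).
have code_inj : injective code.
  move=> t u /(congr1 val) /= E; apply/val_inj.
  by case: (odd t) (odd u) E => [] [] /=; lia.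
rewrite /free_count -[L %/ 2]card_ord -(card_imset _ code_inj); apply/subset_leq_card/subsetP.
move=> _ /imsetP [t _ ->]; rewrite inE /in_pattern /=.
by have := odd_double_half t; case: (odd t) => /= ?; apply/negP; lia.
Qed.

Section Blocks.

Variables K L : nat.
Hypothesis L_gt0 : 0 < L.

Local Notation block := {ffun 'I_L -> bool}.
Local Notation blocks := {ffun 'I_K -> block}.

Lemma block_pos_subproof (b : 'I_K) (j : 'I_L) : b * L + j < K * L.
Proof. by have := ltn_ord j; have := ltn_ord b; nia. Qed.

Definition block_pos b j : 'I_(K * L) := Ordinal (block_pos_subproof b j).

Lemma block_index_subproof (p : 'I_(K * L)) : p %/ L < K.
Proof. by rewrite ltn_divLR. Qed.

Definition block_index p : 'I_K := Ordinal (block_index_subproof p).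
Definition block_offset (p : 'I_(K * L)) : 'I_L := Ordinal (ltn_pmod p L_gt0).

Definition concat_blocks (F : blocks) : bstring (K * L) :=
  [ffun p => F (block_index p) (block_offset p)].

Lemma concat_blocksE F b j : concat_blocks F (block_pos b j) = F b j.
Proof.
rewrite ffunE; congr (F _ _); apply/val_inj => /=.
  by rewrite divnMDl // divn_small ?addn0.
by rewrite modnMDl modn_small.
Qed.

Lemma concat_blocks_inj : injective concat_blocks.
Proof. by move=> F G FG; apply/ffunP => b; apply/ffunP => j; rewrite -!concat_blocksE FG. Qed.

Lemma card_blockwise (P : pred block) :
  #|[set F : blocks | [forall b, P (F b)]]| = #|P| ^ K.
Proof.
rewrite -[in RHS](card_ord K) -card_ffun_on; apply: eq_card => F; rewrite inE.
by apply/forallP/ffun_onP.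
Qed.

Definition pattern_filled (f : block) := [forall j : 'I_L, in_pattern j ==> f j].

Lemma card_pattern_filled : #|[pred f | pattern_filled f]| = 2 ^ free_count L.
Proof.
pose allowed (j : 'I_L) : pred bool := if in_pattern j then pred1 true else predT.
rewrite (eq_card (B := family allowed)); last first.
  move=> f; rewrite !inE; apply/forall_inP/familyP => fP j.
    by rewrite /allowed; case: ifP => // /fP ->.
  by move=> pj; have := fP j; rewrite /allowed pj inE => /eqP.
rewrite card_family foldrE big_image -prod_nat_const [RHS]big_mkcond /=.
apply: eq_bigr => j _; rewrite /allowed inE; case: (in_pattern j) => /=.
  exact: card1.
exact: card_bool.
Qed.

Definition block_family : {set blocks} :=
  [set F : blocks | [forall b, F b != [ffun=> false]]]
    :\: [set F : blocks | [forall b, ~~ pattern_filled (F b)]].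

Lemma card_block_family :
  (2 ^ L - 1) ^ K <= #|block_family| + (2 ^ L - 2 ^ free_count L) ^ K.
Proof.
have card_block : #|block| = 2 ^ L by rewrite card_ffun card_bool card_ord.
have card_nonzero : #|[pred f : block | f != [ffun=> false]]| = 2 ^ L - 1.
  by rewrite -card_block subn1 -(cardC1 [ffun=> false]); apply: eq_card => f; rewrite !inE.
have card_unfilled : #|[pred f | ~~ pattern_filled f]| = 2 ^ L - 2 ^ free_count L.
  by rewrite -card_block -card_pattern_filled -(cardC [pred f | pattern_filled f]) addKn.
rewrite -card_nonzero -card_unfilled -!card_blockwise addnC.
apply: leq_trans (leq_card_setU _ _); apply: subset_leq_card.
by rewrite -subDset.
Qed.

Hypothesis L_div4 : 4 %| L.

(* [j + 1] if [j = 0, 1 (mod 4)], [j - 1] if [j = 2, 3 (mod 4)]. *)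
Lemma pattern_neighbour (j : 'I_L) :
  exists2 j' : 'I_L, in_pattern j' & (j'.+1 == j) || (j.+1 == j').
Proof.
have ltjL := ltn_ord j; case: (ltnP (j %% 4) 2) => j_mod4.
  have ltSjL : j.+1 < L by lia.
  by exists (Ordinal ltSjL); rewrite /in_pattern /=; lia.
have ltPjL : j.-1 < L by lia.
by exists (Ordinal ltPjL); rewrite /in_pattern /=; lia.
Qed.

Lemma skewincidence_concat_blocks F G : F \in block_family -> G \in block_family ->
  skewincidence (concat_blocks F) (concat_blocks G).
Proof.
rewrite !inE negb_forall => /andP [/existsP [b /negPn Fb_filled] _] /andP [_ /forallP Gnz].
have [j Gbj] : exists j, G b j.
  case: (pickP (G b)) => [j|G0]; first by exists j.
  by have /eqP[] := Gnz b; apply/ffunP => j; rewrite ffunE G0.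
have [j' pj' adj] := pattern_neighbour j.
have Fbj' : F b j' by move/forall_inP: Fb_filled; apply.
apply/existsP; case/orP: adj => /eqP adj.
  exists (block_pos b j'); apply/existsP; exists (block_pos b j).
  by rewrite !concat_blocksE Fbj' Gbj /= -adj addnS eqxx.
exists (block_pos b j); apply/existsP; exists (block_pos b j').
by rewrite !concat_blocksE Fbj' Gbj orbT /= -adj addnS eqxx.
Qed.

Lemma strongly_skew_block_family : strongly_skew (concat_blocks @: block_family).
Proof.
apply/forall_inP => _ /imsetP [F FD ->]; apply/forall_inP => _ /imsetP [G GD ->].
exact: skewincidence_concat_blocks.
Qed.

End Blocks.

Lemma leq_expn2r m n e : m <= n -> m ^ e <= n ^ e.
Proof. by case: e => [|e] mn; [rewrite !expn0 | rewrite leq_exp2r]. Qed.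

Lemma bernoulli_lower a d n : a ^ n * (a + n.+1 * d) <= (a + d) ^ n.+1.
Proof.
elim: n => [|n IHn]; first by rewrite expn0 expn1 mul1n mul1n.
have an_le : a ^ n <= (a + d) ^ n by rewrite leq_expn2r ?leq_addr.
rewrite expnS [(a + d) ^ n.+2]expnS.
move: IHn an_le; set p := a ^ n; set q := (a + d) ^ n.+1; nia.
Qed.

Lemma bernoulli_upper a d n : (a + d) ^ n.+1 <= a ^ n.+1 + n.+1 * d * (a + d) ^ n.
Proof.
elim: n => [|n IHn]; first by rewrite !expn1 expn0; lia.
have an_le : a ^ n.+1 <= (a + d) ^ n.+1 by rewrite leq_expn2r ?leq_addr.
have := expnS (a + d) n; rewrite [(a + d) ^ n.+2]expnS [a ^ n.+2]expnS.
move: IHn an_le; set p := a ^ n.+1; set q := (a + d) ^ n.+1; set r := (a + d) ^ n; nia.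
Qed.

Lemma expn_pred_bound X K T : K * T = X -> X ^ K * T <= (X - 1) ^ K * T + X ^ K.
Proof.
case: K => [|k]; first by rewrite !expn0; lia.
case: X => [|x] KT; first by rewrite exp0n.
have := bernoulli_upper x 1 k; rewrite subn1 addn1 /= => bound.
have := expnS x.+1 k; move: bound; set p := x.+1 ^ k.+1; set q := x.+1 ^ k; nia.
Qed.

Lemma expn_add_bound Z Y K T : 0 < K -> K * Y = (Z + Y) * T ->
  Z ^ K * T.+1 <= (Z + Y) ^ K.
Proof.
case: K => [|k] // _ KY; apply: leq_trans (bernoulli_lower Z Y k).
rewrite KY expnS [Z * _]mulnC -mulnA leq_mul2l; apply/orP; right; nia.
Qed.

Lemma density_bound m b s : 0 < m -> 2 * m <= s ->
  (2 ^ (4 * m) - 1) ^ 2 ^ (3 * m) <= b + (2 ^ (4 * m) - 2 ^ s) ^ 2 ^ (3 * m) ->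
  (2 ^ (4 * m)) ^ 2 ^ (3 * m) * (2 ^ m - 2) <= b * 2 ^ m.
Proof.
move=> m_gt0 s_ge bound.
set X := 2 ^ (4 * m); set K := 2 ^ (3 * m); set T := 2 ^ m; set Y := 2 ^ (2 * m).
have KT : K * T = X by rewrite -expnD; congr expn; lia.
have KY : K * Y = X * T by rewrite -!expnD; congr expn; lia.
have YX : Y <= X by rewrite leq_exp2l //; lia.
have unfilled_le : (X - 2 ^ s) ^ K <= (X - Y) ^ K.
  by rewrite leq_expn2r // leq_sub2l // leq_exp2l.
have near_full : X ^ K * T <= (X - 1) ^ K * T + X ^ K := expn_pred_bound KT.
have few_unfilled : (X - Y) ^ K * T.+1 <= X ^ K.
  by rewrite -{2}(subnK YX); apply: expn_add_bound; rewrite ?expn_gt0 ?subnK.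
have bound_T : (X - 1) ^ K * T <= b * T + (X - Y) ^ K * T.
  by rewrite -mulnDl leq_mul2r (leq_trans bound) ?leq_add2l ?orbT.
move: near_full few_unfilled bound_T; rewrite mulnBr mulnSr.
move: (X ^ K) ((X - 1) ^ K) ((X - Y) ^ K) => P A W.
clear; clearbody T; lia.
Qed.

Lemma M_lower m n : 0 < m -> 2 ^ (3 * m) * (4 * m) <= n ->
  2 ^ n * (2 ^ m - 2) <= M n * 2 ^ m.
Proof.
move=> m_gt0 n_ge; set K := 2 ^ (3 * m); set L := 4 * m.
have L_gt0 : 0 < L by rewrite muln_gt0.
have L_div4 : 4 %| L by rewrite dvdn_mulr.
have free_ge : 2 * m <= free_count L.
  by apply: leq_trans (free_count_ge L); rewrite leq_divRL // /L; lia.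
have dense := density_bound m_gt0 free_ge (card_block_family K L).
have := M_pad (n - K * L) (strongly_skew_block_family K L_gt0 L_div4).
rewrite subnKC // card_imset; last exact: concat_blocks_inj.
have -> : 2 ^ n = 2 ^ (n - K * L) * (2 ^ L) ^ K.
  by rewrite -expnM -expnD mulnC subnK // mulnC.
rewrite -mulnA => padded; apply: leq_trans (leq_mul padded (leqnn _)).
by rewrite -mulnA leq_mul2l dense orbT.
Qed.

From Stdlib Require Import Reals Lra.
Import ssrnat.

Local Open Scope R_scope.

Lemma INR_muln a b : INR (a * b)%N = INR a * INR b.
Proof. by rewrite -multE mult_INR. Qed.

Lemma INR_expn a n : INR (a ^ n)%N = INR a ^ n.
Proof. by elim: n => [|n IHn]; rewrite ?expn0 // expnS INR_muln IHn. Qed.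

Lemma ratio_bounds x P T : 0 < P -> 2 <= T -> x <= P -> P * (T - 2) <= x * T ->
  1 - 2 / T <= x / P <= 1.
Proof.
move=> P_gt0 T_ge2 x_le lower.
have xE : x = x / P * P by field; lra.
have vT : 2 / T * T = 2 by field; lra.
move: (x / P) (2 / T) xE vT => u v -> vT in x_le lower *.
have u_le1 : u <= 1 by apply: (Rmult_le_reg_r P); lra.
have lowerT : T - 2 <= u * T by apply: (Rmult_le_reg_l P); lra.
split; nra.
Qed.

Lemma M_ratio_bounds m n : (0 < m)%N -> (2 ^ (3 * m) * (4 * m) <= n)%N ->
  1 - 2 / 2 ^ m <= INR (M n) / 2 ^ n <= 1.
Proof.
move=> m_gt0 n_ge; have INR2 : INR 2 = 2 by rewrite /=; lra.
have two_le : (2 <= 2 ^ m)%N by rewrite -{1}(expn1 2) leq_exp2l.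
have T_ge2 : 2 <= 2 ^ m by rewrite -INR2 -INR_expn; apply/le_INR/leP.
have hi : INR (M n) <= 2 ^ n by rewrite -INR2 -INR_expn; apply/le_INR/leP/M_le.
have lo := le_INR _ _ (elimT leP (M_lower m_gt0 n_ge)).
rewrite !INR_muln minus_INR ?INR_expn ?INR2 in lo; last exact/leP.
by apply: ratio_bounds => //; apply: pow_lt; lra.
Qed.

Lemma exists_pow2_small eps : 0 < eps -> exists2 m, (0 < m)%N & 2 / 2 ^ m < eps.
Proof.
move=> eps_gt0; have [m [m_small /ltP m_gt0]] := archimed_cor1 (eps / 2) ltac:(lra).
exists m => //; have INR2 : INR 2 = 2 by rewrite /=; lra.
have m_le : INR m <= 2 ^ m.
  by rewrite -INR2 -INR_expn; apply/le_INR/leP/ltnW/ltn_expl.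
have := Rinv_le_contravar _ _ (lt_0_INR _ (elimT ltP m_gt0)) m_le.
rewrite /Rdiv; lra.
Qed.

Theorem corollary1 :
  Un_cv (fun n : nat => (INR (M n) / 2 ^ n)%R) 1%R.
Proof.
move=> eps /exists_pow2_small [m m_gt0 small].
exists (2 ^ (3 * m) * (4 * m))%N => n /leP n_ge.
have [lo hi] := M_ratio_bounds m_gt0 n_ge.
rewrite /R_dist Rabs_left1; lra.
Qed.
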